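(* For every instance of the game and every facility placement profile $\mathbf{s}$, every minimum neighborhood set $\mathrm{MNS}_{\mathbf{s}}(F^*,V^* )$ is uniquely determined, hence the class set $\mathcal{C}=\{C_1,C_2,\ldots\}$ of $\mathbf{s}$ is unique; moreover $\ell(C_i)<\ell(C_{i+1})$ for all $i\ge1$ for which $C_{i+1}$ exists.
   Context: Setting: a finite directed graph $H=(V,E,w)$ with vertex weights $w:V\to\mathbb{Q}_{>0}$ (vertices are clients), $w(X)=\sum_{v\in X}w(v)$, a finite set $F$ of facility agents, and a facility placement profile $\mathbf{s}=(s_f)_{f\in F}$ with $s_f\in V$. For $v\in V$ let $N(v)=\{v\}\cup\{u:(v,u)\in E\}$, $N_{\mathbf{s}}(v)=\{f\in F:s_f\in N(v)\}$, $A_{\mathbf{s}}(f)=\{v\in V: f\in N_{\mathbf{s}}(v)\}$ and $A_{\mathbf{s}}(T)=\bigcup_{f\in T}A_{\mathbf{s}}(f)$ for $T\subseteq F$. For nonempty $F^*\subseteq F$ and $V^*\subseteq V$, the minimum neighborhood set $\mathrm{MNS}_{\mathbf{s}}(F^*,V^* )$ is a subset of $F^*$ of largest cardinality among the nonempty $T\subseteq F^*$ minimizing $\frac{w(A_{\mathbf{s}}(T)\cap V^* )}{|T|}$. The class set is defined inductively: for $i\ge1$, while $F\setminus\bigcup_{j<i}F_j\neq\varnothing$, let $F_i=\mathrm{MNS}_{\mathbf{s}}\big(F\setminus\bigcup_{j<i}F_j,\ V\setminus\bigcup_{j<i}V_j\big)$ and $V_i=A_{\mathbf{s}}(F_i)\setminus\bigcup_{j<i}V_j$;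 the class is $C_i=(F_i,V_i)$ with average load $\ell(C_i)=w(V_i)/|F_i|$. *)

From mathcomp Require Import all_boot all_order all_algebra.
Set Implicit Arguments. Unset Strict Implicit. Unset Printing Implicit Defensive.
Import Order.TTheory GRing.Theory Num.Theory.
Local Open Scope ring_scope.

Section Game.
Variables (V : finType) (E : rel V) (w : V -> rat) (F : finType) (s : F -> V).

Definition attr (f : F) : {set V} := [set v | (s f == v) || E v (s f)].

Definition attrS (T : {set F}) : {set V} := \bigcup_(f in T) attr f.

Definition wt (X : {set V}) : rat := \sum_(v in X) w v.

Definition ratio (T : {set F}) (Vs : {set V}) : rat :=
  wt (attrS T :&: Vs) / (#|T|%:R).

Definition isMNS (Fs : {set F}) (Vs : {set V}) (T : {set F}) : Prop :=
  [/\ T \subset Fs, T != set0,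
      (forall T' : {set F}, T' \subset Fs -> T' != set0 -> ratio T Vs <= ratio T' Vs) &
      (forall T' : {set F}, T' \subset Fs -> T' != set0 -> ratio T' Vs = ratio T Vs ->
         (#|T'| <= #|T|)%N)].

(* cs is a class set built from the already covered facilities Fu and
   clients Vu (Fu = \bigcup_{j<i} F_j, Vu = \bigcup_{j<i} V_j). *)
Fixpoint classes_from (Fu : {set F}) (Vu : {set V})
    (cs : seq ({set F} * {set V})) : Prop :=
  match cs with
  | [::] => ~: Fu = set0
  | (Fi, Vi) :: cs' =>
      [/\ ~: Fu != set0, isMNS (~: Fu) (~: Vu) Fi,
          Vi = attrS Fi :\: Vu & classes_from (Fu :|: Fi) (Vu :|: Vi) cs']
  end.

Definition is_class_set (cs : seq ({set F} * {set V})) : Prop :=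
  classes_from set0 set0 cs.

Definition load (C : {set F} * {set V}) : rat := wt C.2 / (#|C.1|%:R).

End Game.

From Pilot Require Import Defs.
From mathcomp Require Import all_boot all_order all_algebra.
From mathcomp Require Import lra zify.
Set Implicit Arguments. Unset Strict Implicit.
Import Order.TTheory GRing.Theory Num.Theory.
Local Open Scope ring_scope.

(* The coverage function g(T) = w(A_s(T) ∩ V* ) is submodular, and the sets
   attaining the minimum ratio λ = min g(T)/|T| are exactly those with
   g(T) = λ|T|, while g(T) >= λ|T| for all T.  Submodularity makes these tight
   sets closed under union, so the tight set of largest cardinality is unique.
   If ℓ(C_{i+1}) <= ℓ(C_i) = λ, then F_i ∪ F_{i+1} is tight in round i, since
   its coverage of the clients left at round i is w(V_i) + w(V_{i+1}); this
   contradicts the maximality of F_i. *)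

Lemma submod_avg_setU (R : realDomainType) (T : finType) (g : {set T} -> R)
    (l : R) (A B : {set T}) :
  g (A :|: B) + g (A :&: B) <= g A + g B ->
  l * #|A :&: B|%:R <= g (A :&: B) ->
  g A = l * #|A|%:R -> g B = l * #|B|%:R ->
  g (A :|: B) <= l * #|A :|: B|%:R.
Proof.
move=> submod lbI gA gB.
have cardUI :
    l * #|A :|: B|%:R = l * #|A|%:R + l * #|B|%:R - l * #|A :&: B|%:R.
  by rewrite -!mulrDr -mulrBr -natrD -cardsUI natrD addrK.
by rewrite cardUI -gA -gB; lra.
Qed.

Section Game.
Variables (V : finType) (E : rel V) (w : V -> rat) (F : finType) (s : F -> V).
Hypothesis w_ge0 : forall v, 0 <= w v.

Local Notation attrS := (attrS E s).
Local Notation wt := (wt w).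
Local Notation ratio := (Defs.ratio E w s).
Local Notation isMNS := (isMNS E w s).
Local Notation classes_from := (classes_from E w s).

Lemma wt_ge0 (X : {set V}) : 0 <= wt X.
Proof. exact: sumr_ge0. Qed.

Lemma wtID (X Y : {set V}) : wt X = wt (X :&: Y) + wt (X :\: Y).
Proof. exact: big_setID. Qed.

Lemma le_wt (X Y : {set V}) : X \subset Y -> wt X <= wt Y.
Proof. by move=> sXY; rewrite (wtID Y X) (setIidPr sXY) lerDl wt_ge0. Qed.

Lemma wtUI (X Y : {set V}) : wt (X :|: Y) + wt (X :&: Y) = wt X + wt Y.
Proof.
rewrite (wtID (X :|: Y) X) (wtID Y X) setUK setDUl setDv set0U setIC.
by rewrite addrAC -addrA.
Qed.

Lemma wtU_disjoint (X Y : {set V}) :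
  X :&: Y = set0 -> wt (X :|: Y) = wt X + wt Y.
Proof. by move=> XY0; rewrite -wtUI XY0 /Defs.wt big_set0 addr0. Qed.

Lemma attrSU (A B : {set F}) : attrS (A :|: B) = attrS A :|: attrS B.
Proof. exact: bigcup_setU. Qed.

Lemma attrSI (A B : {set F}) : attrS (A :&: B) \subset attrS A :&: attrS B.
Proof.
apply/bigcupsP => f; rewrite inE => /andP[fA fB].
by rewrite subsetI !(bigcup_max f).
Qed.

Definition cover (Vs : {set V}) (T : {set F}) : rat := wt (attrS T :&: Vs).

Lemma cover_submod (Vs : {set V}) (A B : {set F}) :
  cover Vs (A :|: B) + cover Vs (A :&: B) <= cover Vs A + cover Vs B.
Proof.
rewrite /cover attrSU setIUl -(wtUI (attrS A :&: Vs)) lerD2l le_wt //.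
by rewrite setIACA setIid setSI ?attrSI.
Qed.

Lemma ratio_geE (l : rat) (Vs : {set V}) (T : {set F}) : T != set0 ->
  (l <= ratio T Vs) = (l * #|T|%:R <= cover Vs T).
Proof. by move=> nT; rewrite ler_pdivlMr // ltr0n card_gt0. Qed.

Lemma ratio_leE (l : rat) (Vs : {set V}) (T : {set F}) : T != set0 ->
  (ratio T Vs <= l) = (cover Vs T <= l * #|T|%:R).
Proof. by move=> nT; rewrite ler_pdivrMr // ltr0n card_gt0. Qed.

Section MinimumNeighborhoodSet.
Variables (Fs : {set F}) (Vs : {set V}) (T : {set F}).
Hypothesis MNS_T : isMNS Fs Vs T.

Lemma MNS_cover : cover Vs T = ratio T Vs * #|T|%:R.
Proof.
case: MNS_T => _ nT _ _.
by rewrite divfK // pnatr_eq0 -lt0n card_gt0.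
Qed.

Lemma MNS_cover_lb (T' : {set F}) :
  T' \subset Fs -> ratio T Vs * #|T'|%:R <= cover Vs T'.
Proof.
case: MNS_T => _ _ minT _ sT'.
have [->|nT'] := eqVneq T' set0; first by rewrite cards0 mulr0 wt_ge0.
by rewrite -ratio_geE // minT.
Qed.

Lemma MNS_maximal (T' : {set F}) : T' \subset Fs -> T \subset T' ->
  cover Vs T' <= ratio T Vs * #|T'|%:R -> T' = T.
Proof.
case: MNS_T => _ nT minT maxT sT' sTT' coverT'.
have nT' : T' != set0 by apply: contraNneq nT => T'0; rewrite -subset0 -T'0.
have eq_ratio : ratio T' Vs = ratio T Vs.
  by apply/eqP; rewrite eq_le ratio_leE // coverT' minT.
by apply/eqP; rewrite eq_sym eqEcard sTT' maxT.
Qed.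

End MinimumNeighborhoodSet.

Lemma MNS_unique (Fs : {set F}) (Vs : {set V}) (T1 T2 : {set F}) :
  isMNS Fs Vs T1 -> isMNS Fs Vs T2 -> T1 = T2.
Proof.
suff sub21 : forall T1 T2, isMNS Fs Vs T1 -> isMNS Fs Vs T2 -> T2 \subset T1.
  by move=> h1 h2; apply/eqP; rewrite eqEsubset !sub21.
move=> {}T1 {}T2 MNS1 MNS2.
have [[sT1 nT1 min1 _] [sT2 nT2 min2 _]] := (MNS1, MNS2).
have eq_ratio : ratio T2 Vs = ratio T1 Vs.
  by apply/eqP; rewrite eq_le min1 ?min2.
have cover2 : cover Vs T2 = ratio T1 Vs * #|T2|%:R.
  by rewrite -eq_ratio (MNS_cover MNS2).
have sU : T1 :|: T2 \subset Fs by rewrite subUset sT1.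
have sI : T1 :&: T2 \subset Fs by rewrite (subset_trans (subsetIl _ _)).
have tightU := submod_avg_setU (cover_submod Vs T1 T2) (MNS_cover_lb MNS1 sI)
  (MNS_cover MNS1) cover2.
by rewrite -(MNS_maximal MNS1 sU (subsetUl _ _) tightU) subsetUr.
Qed.

Lemma MNS_exists (Fs : {set F}) (Vs : {set V}) :
  Fs != set0 -> exists T, isMNS Fs Vs T.
Proof.
move=> nFs.
pose P := [pred T : {set F} | (T \subset Fs) && (T != set0)].
have PFs : P Fs by rewrite /P /= subxx nFs.
have [T1 PT1 minT1] := arg_minP (fun T => ratio T Vs) PFs.
pose Q := [pred T | P T && (ratio T Vs == ratio T1 Vs)].
have QT1 : Q T1 by rewrite inE PT1 /=.
have [T2 /andP[/andP[sT2 nT2] /eqP eT2] maxT2] :=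
  @arg_maxnP _ T1 Q (fun T => #|T|) QT1.
exists T2; split => // T' sT' nT'; first by rewrite eT2 minT1 //= sT' nT'.
by move=> eT'; apply: maxT2; rewrite inE /= sT' nT' eT' eT2 /=.
Qed.

Lemma classes_from_exists (Fu : {set F}) (Vu : {set V}) :
  exists cs, classes_from Fu Vu cs.
Proof.
move: {2}#|~: Fu| (leqnn #|~: Fu|) => n.
elim: n Fu Vu => [|n IH] Fu Vu le_n.
  by exists [::]; apply/eqP; rewrite -cards_eq0 -leqn0.
have [CFu0|nCFu] := eqVneq (~: Fu) set0; first by exists [::].
have [T MNS_T] := MNS_exists (~: Vu) nCFu.
have [|cs csP] := IH (Fu :|: T) (Vu :|: (attrS T :\: Vu)).
  case: MNS_T => sT nT _ _.
  have shrink : ~: (Fu :|: T) \proper ~: Fu.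
    rewrite setCU; apply/properP; split; first exact: subsetIl.
    have [f fT] := set0Pn _ nT.
    by exists f; [exact: subsetP sT f fT | rewrite !inE fT andbF].
  by move: (proper_card shrink) le_n; lia.
by exists ((T, attrS T :\: Vu) :: cs).
Qed.

Lemma classes_from_uniq (Fu : {set F}) (Vu : {set V}) cs1 cs2 :
  classes_from Fu Vu cs1 -> classes_from Fu Vu cs2 -> cs1 = cs2.
Proof.
elim: cs1 Fu Vu cs2 => [|[F1 V1] cs1 IH] Fu Vu [|[F2 V2] cs2] //=.
- by move=> ->; case; rewrite eqxx.
- by case=> /eqP nCFu _ _ _ /nCFu.
case=> _ MNS1 -> cls1 [_ MNS2 -> cls2].
have eF12 := MNS_unique MNS1 MNS2; subst F2.
by rewrite (IH _ _ _ cls1 cls2).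
Qed.

Lemma cover_setU_residual (Vu : {set V}) (F1 F2 : {set F}) :
  cover (~: Vu) (F1 :|: F2) =
  wt (attrS F1 :\: Vu) + wt (attrS F2 :\: (Vu :|: (attrS F1 :\: Vu))).
Proof.
rewrite /cover attrSU -wtU_disjoint; last first.
  by apply/setP => v; rewrite !inE; case: (v \in Vu); case: (v \in attrS F1).
congr wt; apply/setP => v; rewrite !inE.
by case: (v \in Vu); case: (v \in attrS F1); case: (v \in attrS F2).
Qed.

Lemma load_lt_next (Fu : {set F}) (Vu : {set V}) C1 C2 cs :
  classes_from Fu Vu [:: C1, C2 & cs] -> load w C1 < load w C2.
Proof.
case: C1 C2 => [F1 V1] [F2 V2] [_ MNS1 -> [_ MNS2 -> _]].
have [[sF1 _ _ _] [sF2 nF2 _ _]] := (MNS1, MNS2).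
have cover1 : wt (attrS F1 :\: Vu) = ratio F1 (~: Vu) * #|F1|%:R.
  by rewrite -(MNS_cover MNS1) /cover setDE.
have load1 : wt (attrS F1 :\: Vu) / #|F1|%:R = ratio F1 (~: Vu).
  by rewrite setDE.
rewrite /load /= load1 ltNge ler_pdivrMr ?ltr0n ?card_gt0 //.
apply/negP => le_load2.
have disjF12 : F1 :&: F2 = set0.
  apply/eqP; rewrite setI_eq0 disjoint_sym disjoints_subset.
  by rewrite (subset_trans sF2) // setCU subsetIr.
have sF12 : F1 :|: F2 \subset ~: Fu.
  by rewrite subUset sF1 (subset_trans sF2) // setCU subsetIl.
have cover12 :
    cover (~: Vu) (F1 :|: F2) <= ratio F1 (~: Vu) * #|F1 :|: F2|%:R.
  have cardF12 : #|F1 :|: F2| = (#|F1| + #|F2|)%N.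
    by rewrite -cardsUI disjF12 cards0 addn0.
  by rewrite cover_setU_residual cover1 cardF12 natrD mulrDr lerD2l.
have F12 := MNS_maximal MNS1 sF12 (subsetUl _ _) cover12.
have sF21 : F2 \subset F1 by rewrite -F12 subsetUr.
by move: nF2; rewrite -(setIidPr sF21) disjF12 eqxx.
Qed.

Lemma classes_from_load_sorted (Fu : {set F}) (Vu : {set V}) cs :
  classes_from Fu Vu cs -> sorted (fun C D => load w C < load w D) cs.
Proof.
elim: cs Fu Vu => [|[F1 V1] cs IH] Fu Vu //.
case: cs IH => [|C2 cs] IH // cls; rewrite /= (load_lt_next cls).
by have [_ _ _ /IH] := cls.
Qed.

End Game.

Theorem mainTheorem6 (V : finType) (E : rel V) (w : V -> rat) (F : finType)
    (s : F -> V) (w_pos : forall v, 0 < w v) :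
  (forall (Fs : {set F}) (Vs : {set V}), Fs != set0 ->
     exists! T : {set F}, isMNS E w s Fs Vs T) /\
  (exists! cs : seq ({set F} * {set V}), is_class_set E w s cs) /\
  (forall cs : seq ({set F} * {set V}), is_class_set E w s cs ->
     forall i : nat, (i.+1 < size cs)%N ->
       load w (nth (set0, set0) cs i) < load w (nth (set0, set0) cs i.+1)).
Proof.
have w_ge0 v : 0 <= w v by exact: ltW.
split; [|split].
- move=> Fs Vs nFs; have [T MNS_T] := MNS_exists E w s Vs nFs.
  by exists T; split=> // T'; apply: (MNS_unique w_ge0 MNS_T).
- have [cs csP] := classes_from_exists E w s set0 set0.
  by exists cs; split=> // cs'; apply: (classes_from_uniq w_ge0 csP).
- by move=> cs /classes_from_load_sorted/sortedP; apply.
Qed.
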